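(* Let $m,n\ge2$, $\lambda>0$, $C\in\mathbb{R}^{m\times n}$, let $a\in\Delta_m$, $b\in\Delta_n$ have strictly positive entries, let $P=S_\lambda(C,a,b)$, and let $G\in\mathbb{R}^{m\times n}$. Consider the following procedure (Algorithm 1): 1. $T\leftarrow P\odot G$; 2. $\tilde T\leftarrow T_{:,1:n-1}$, $\tilde P\leftarrow P_{:,1:n-1}\in\mathbb{R}^{m\times(n-1)}$; 3. $t^{(a)}\leftarrow T\mathbb{1}_n$, $\tilde t^{(b)}\leftarrow\tilde T^\top\mathbb{1}_m$; 4. $\begin{bmatrix}g_a\\ g_{\tilde b}\end{bmatrix}\leftarrow\begin{bmatrix}\mathrm{diag}(a) & \tilde P\\ \tilde P^\top & \mathrm{diag}(\tilde b)\end{bmatrix}^{-1}\begin{bmatrix}t^{(a)}\\ \tilde t^{(b)}\end{bmatrix}$; 5. $g_b\leftarrow[g_{\tilde b};0]\in\mathbb{R}^n$; 6. $U\leftarrow g_a\mathbb{1}_n^\top+\mathbb{1}_m g_b^\top$; 7. $G_C\leftarrow-\lambda^{-1}(T-P\odot U)$. Then the $(m+n-1)\times(m+n-1)$ matrix in step 4 is invertible, and $(x,y)=(\mathrm{vec}(G_C),[g_a;g_{\tilde b}])$ is the (unique) solution of $$\begin{bmatrix}\lambda\,\mathrm{diag}(p)^{-1} & \tilde E\\ \tilde E^\top & \mathbf{0}\end{bmatrix}\begin{bmatrix}x\\ -y\end{bmatrix}=\begin{bmatrix}-\mathrm{vec}(G)\\ \mathbf{0}\end{bmatrix},\quad p=\mathrm{vec}(P).$$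 Consequently, if $G=\nabla_P\ell$ for a loss $\ell$ depending on $(C,a,b)$ only through $P=S_\lambda(C,a,b)$ (as in Theorem 1), then $G_C=\nabla_C\ell$, $g_a=\nabla_a\ell$ and $g_{\tilde b}=\nabla_{\tilde b}\ell$.
   Context: $\Delta_m=\{a\in\mathbb{R}^m: a_i\ge 0,\ \sum_i a_i=1\}$; $\Pi(a,b)=\{P\in\mathbb{R}^{m\times n}_{\ge0}: P\mathbb{1}_n=a,\ P^\top\mathbb{1}_m=b\}$; $h(P)=-\sum_{i,j}P_{i,j}(\log P_{i,j}-1)$; $S_\lambda(C,a,b)=\arg\min_{P\in\Pi(a,b)}\langle P,C\rangle_F-\lambda h(P)$. $\odot$ is the entrywise (Hadamard) product, $\mathbb{1}_k$ the all-ones vector in $\mathbb{R}^k$. For $v\in\mathbb{R}^n$, $\tilde v=(v_1,\dots,v_{n-1})$. Vectorization is column-major ($\mathrm{vec}(X)_{(j-1)m+i}=X_{i,j}$). $E=[\mathbb{1}_n\otimes I_m,\ I_n\otimes\mathbb{1}_m]\in\mathbb{R}^{mn\times(m+n)}$ and $\tilde E$ is $E$ with its last column deleted. Theorem 1: for the implicit map $(c,a,\tilde b)\mapsto p$ defined by the KKT conditions of the Sinkhorn problem (with the last column-marginal constraint dropped and $\beta_n=0$), the gradients of $\ell=L(p)$ satisfy $\begin{bmatrix}\lambda\mathrm{diag}(p)^{-1}&\tilde E\\ \tilde E^\top&0\end{bmatrix}\begin{bmatrix}\nabla_c\ell\\-\nabla_{[a;\tilde b]}\ell\end{bmatrix}=\begin{bmatrix}-\nabla_p\ell\\0\end{bmatrix}$.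 *)

From HB Require Import structures.
From mathcomp Require Import all_boot all_order all_algebra.
From mathcomp Require Import reals exp.
Set Implicit Arguments. Unset Strict Implicit. Unset Printing Implicit Defensive.
Import Order.TTheory GRing.Theory Num.Theory.
Local Open Scope ring_scope.

Section Defs.
Variable R : realType.

Definition in_simplex k (a : 'cV[R]_k) : Prop :=
  (forall i, 0 <= a i 0) /\ \sum_(i < k) a i 0 = 1.

Definition in_transport m n (a : 'cV[R]_m) (b : 'cV[R]_n) (P : 'M[R]_(m, n)) :
  Prop :=
  (forall i j, 0 <= P i j) /\ P *m const_mx 1 = a /\ P^T *m const_mx 1 = b.

Definition entropy m n (P : 'M[R]_(m, n)) : R :=
  - \sum_(i < m) \sum_(j < n) P i j * (ln (P i j) - 1).

Definition frob m n (P C : 'M[R]_(m, n)) : R :=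
  \sum_(i < m) \sum_(j < n) P i j * C i j.

Definition is_sinkhorn m n (lam : R) (C : 'M[R]_(m, n)) (a : 'cV[R]_m)
  (b : 'cV[R]_n) (P : 'M[R]_(m, n)) : Prop :=
  in_transport a b P /\
  forall Q, in_transport a b Q ->
    frob P C - lam * entropy P <= frob Q C - lam * entropy Q.

(* column-major vectorization: vec X at index (j-1)m+i is X_ij.
   MathComp's mxvec is row-major, so mxvec of the transpose is column-major. *)
Definition vec m n (X : 'M[R]_(m, n)) : 'cV[R]_(n * m) := (mxvec X^T)^T.

Definition hadamard m n (X Y : 'M[R]_(m, n)) : 'M[R]_(m, n) :=
  \matrix_(i, j) (X i j * Y i j).

(* columns of E = [1_n (x) I_m, I_n (x) 1_m] *)
Definition Ecol m n (l : 'I_(m + n)) : 'M[R]_(m, n) :=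
  match split l with
  | inl i0 => \matrix_(i, j) (i == i0)%:R
  | inr j0 => \matrix_(i, j) (j == j0)%:R
  end.

Definition Emx m n : 'M[R]_(n * m, m + n) :=
  \matrix_(k, l) vec (Ecol l) k 0.

Lemma widen_tilde_le m n : (m + n.-1 <= m + n)%N.
Proof. by rewrite leq_add2l leq_pred. Qed.

Definition Etilde m n : 'M[R]_(n * m, m + n.-1) :=
  \matrix_(k, l) Emx m n k (widen_ord (@widen_tilde_le m n) l).

Definition tcols m n (X : 'M[R]_(m, n)) : 'M[R]_(m, n.-1) :=
  \matrix_(i, j) X i (widen_ord (leq_pred n) j).
Definition tvec n (v : 'cV[R]_n) : 'cV[R]_(n.-1) :=
  \col_j v (widen_ord (leq_pred n) j) 0.

Section Alg.
Variables (m n : nat) (lam : R) (a : 'cV[R]_m) (b : 'cV[R]_n)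
  (P G : 'M[R]_(m, n)).

Definition alg_T := hadamard P G.
Definition alg_ta : 'cV[R]_m := alg_T *m const_mx 1.
Definition alg_tb : 'cV[R]_(n.-1) := (tcols alg_T)^T *m const_mx 1.
Definition alg_K : 'M[R]_(m + n.-1) :=
  block_mx (diag_mx a^T) (tcols P) (tcols P)^T (diag_mx (tvec b)^T).
Definition alg_g : 'cV[R]_(m + n.-1) := invmx alg_K *m col_mx alg_ta alg_tb.
Definition alg_ga : 'cV[R]_m := usubmx alg_g.
Definition alg_gbt : 'cV[R]_(n.-1) := dsubmx alg_g.
Definition alg_gb : 'cV[R]_n :=
  \col_j (match insub (val j) with Some j' => alg_gbt j' 0 | None => 0 end).
Definition alg_U : 'M[R]_(m, n) := \matrix_(i, j) (alg_ga i 0 + alg_gb j 0).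
Definition alg_GC : 'M[R]_(m, n) :=
  - lam^-1 *: (alg_T - hadamard P alg_U).
End Alg.

Definition kkt m n (lam : R) (P : 'M[R]_(m, n)) :
  'M[R]_(n * m + (m + n.-1)) :=
  block_mx (lam *: diag_mx (map_mx (fun x => x^-1) (vec P))^T) (Etilde m n)
           (Etilde m n)^T 0.

End Defs.

From HB Require Import structures.
From mathcomp Require Import all_boot all_order all_algebra.
From mathcomp Require Import reals sequences exp.
From mathcomp Require Import ring lra.
Import Order.TTheory GRing.Theory Num.Theory.
Local Open Scope ring_scope.
Set Implicit Arguments. Unset Strict Implicit. Unset Printing Implicit Defensive.

(* The Sinkhorn plan [P] has no zero entry: moving mass [t] around a 2x2 cycle
   through a zero entry keeps both marginals, changes the cost linearly in [t]
   but the entropy term by [lam t ln t + O(t)], so small [t] would improve [P].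
   For [p > 0] the matrix [K] of step 4 equals [E~^T diag(p) E~], where
   [E~ y = vec (g_a 1^T + 1 g_b^T)] for [y = [g_a; g_b~]]; since [E~] is
   injective, [K] is positive definite. The first block row of the KKT system
   gives [x] as an affine function of [y] (the formula of step 7), and
   substituting it into [E~^T x = 0] leaves exactly [K y = [t_a; t_b~]]. *)

Section SinkhornPositive.
Variable R : realType.

Lemma mulr_lnB_le (x y : R) : 0 <= x -> 0 < y -> x * (ln y - ln x) <= y - x.
Proof.
rewrite le_eqVlt => /predU1P [<- y0|x0 y0]; first by rewrite mul0r subr0 ltW.
have : ln (y / x) <= y / x - 1.
  by rewrite -[X in ln X](subrKC 1) le_ln1Dx // ltrBrDr addrC subrr divr_gt0.
rewrite ln_div ?posrE // => /(ler_wpM2l (ltW x0)) /le_trans; apply.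
by rewrite mulrBr mulr1 mulrCA divff ?mulr1 // gt_eqF.
Qed.

(* Tangent-line inequality for the convex [x |-> x c + lam x (ln x - 1)], whose
   derivative at [y] is [c + lam ln y]; [y = x] covers the case [x = y = 0]. *)
Lemma entropic_tangent_le (lam c x y : R) : 0 <= lam -> 0 <= x ->
  y = x \/ 0 < y ->
  (y * c + lam * (y * (ln y - 1))) - (x * c + lam * (x * (ln x - 1)))
    <= (y - x) * (c + lam * ln y).
Proof.
move=> lam0 x0 [->|y0]; first by rewrite !subrr mul0r.
rewrite -subr_ge0.
have -> : (y - x) * (c + lam * ln y) -
    (y * c + lam * (y * (ln y - 1)) - (x * c + lam * (x * (ln x - 1)))) =
    lam * ((y - x) - x * (ln y - ln x)) by ring.
by rewrite mulr_ge0 // subr_ge0 mulr_lnB_le.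
Qed.

Lemma frobDl m n (A B W : 'M[R]_(m, n)) : frob (A + B) W = frob A W + frob B W.
Proof.
rewrite /frob -big_split; apply: eq_bigr => i _; rewrite -big_split.
by apply: eq_bigr => j _; rewrite mxE mulrDl.
Qed.

Lemma frobNl m n (A W : 'M[R]_(m, n)) : frob (- A) W = - frob A W.
Proof.
rewrite /frob -sumrN; apply: eq_bigr => i _; rewrite -sumrN.
by apply: eq_bigr => j _; rewrite mxE mulNr.
Qed.

Lemma frobZl m n (t : R) (A W : 'M[R]_(m, n)) : frob (t *: A) W = t * frob A W.
Proof.
rewrite /frob mulr_sumr; apply: eq_bigr => i _; rewrite mulr_sumr.
by apply: eq_bigr => j _; rewrite mxE mulrA.
Qed.

Lemma frob_deltal m n (i0 : 'I_m) (j0 : 'I_n) (W : 'M[R]_(m, n)) :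
  frob (delta_mx i0 j0) W = W i0 j0.
Proof.
rewrite /frob (bigD1 i0) //= [X in _ + X]big1 ?addr0 => [|i /negbTE i_neq].
  rewrite (bigD1 j0) //= big1 ?addr0 => [|j /negbTE j_neq].
    by rewrite mxE !eqxx mul1r.
  by rewrite mxE eqxx j_neq mul0r.
by apply: big1 => j _; rewrite mxE i_neq mul0r.
Qed.

Lemma sinkhorn_objE m n lam (C Q : 'M[R]_(m, n)) :
  frob Q C - lam * entropy Q =
  \sum_i \sum_j (Q i j * C i j + lam * (Q i j * (ln (Q i j) - 1))).
Proof.
rewrite /frob /entropy mulrN opprK mulr_sumr -big_split /=.
by apply: eq_bigr => i _; rewrite mulr_sumr -big_split.
Qed.

(* The alternative [Q i j = P i j] avoids the junk value [ln 0 = 0] in the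
   tangent-line bound. *)
Lemma sinkhorn_first_order m n lam C a b (P Q : 'M[R]_(m, n)) :
  0 <= lam -> is_sinkhorn lam C a b P -> in_transport a b Q ->
  (forall i j, Q i j = P i j \/ 0 < Q i j) ->
  0 <= frob (Q - P) (\matrix_(i, j) (C i j + lam * ln (Q i j))).
Proof.
move=> lam0 [[P0 _] P_min] Q_feas Q_cases.
have := P_min Q Q_feas; rewrite -subr_ge0 !sinkhorn_objE => /le_trans; apply.
rewrite /frob -sumrB; apply: ler_sum => i _; rewrite -sumrB.
apply: ler_sum => j _; rewrite !mxE.
exact: entropic_tangent_le.
Qed.

Lemma delta_mx_row_sums m n (i0 : 'I_m) (j0 : 'I_n) :
  delta_mx i0 j0 *m const_mx 1 = delta_mx i0 0 :> 'cV[R]_m.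
Proof.
apply/matrixP => i k; rewrite (ord1 k) !mxE (bigD1 j0) //= big1 ?addr0.
  by rewrite !mxE !eqxx !andbT mulr1.
by move=> j /negbTE j_neq; rewrite !mxE j_neq andbF mul0r.
Qed.

Lemma row_mass_pos m n (P : 'M[R]_(m, n)) (a : 'cV[R]_m) i :
  P *m const_mx 1 = a -> 0 < a i 0 -> exists j, 0 < P i j.
Proof.
move=> P_rows a_pos; apply/existsP; apply: contraLR a_pos => /existsPn P_le0.
rewrite -leNgt -P_rows mxE; apply: sumr_le0 => j _.
by rewrite mxE mulr1 leNgt P_le0.
Qed.

Definition cycle_mx m n (i0 i1 : 'I_m) (j0 j1 : 'I_n) : 'M[R]_(m, n) :=
  delta_mx i0 j0 + delta_mx i1 j1 - delta_mx i0 j1 - delta_mx i1 j0.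

Section Cycle.
Variables (m n : nat) (i0 i1 : 'I_m) (j0 j1 : 'I_n).
Local Notation D := (cycle_mx i0 i1 j0 j1).

Lemma cycle_mx_row_sums : D *m const_mx 1 = 0 :> 'cV[R]_m.
Proof.
rewrite !mulmxBl mulmxDl !delta_mx_row_sums.
by rewrite addrAC addrK subrr.
Qed.

Lemma cycle_mx_col_sums : D^T *m const_mx 1 = 0 :> 'cV[R]_n.
Proof.
rewrite !linearB linearD /= !trmx_delta !mulmxBl mulmxDl !delta_mx_row_sums.
by rewrite addrK subrr.
Qed.

Lemma frob_cycle_mx (W : 'M[R]_(m, n)) :
  frob D W = W i0 j0 + W i1 j1 - W i0 j1 - W i1 j0.
Proof. by rewrite /cycle_mx !(frobDl, frobNl) !frob_deltal. Qed.

Lemma in_transport_cycle (a : 'cV[R]_m) (b : 'cV[R]_n) (P : 'M[R]_(m, n)) t :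
  in_transport a b P -> (forall i j, 0 <= (P + t *: D) i j) ->
  in_transport a b (P + t *: D).
Proof.
move=> [_ [P_rows P_cols]] Q0; split=> //; split.
  by rewrite mulmxDl -scalemxAl cycle_mx_row_sums scaler0 addr0.
by rewrite linearD linearZ /= mulmxDl -scalemxAl cycle_mx_col_sums scaler0 addr0.
Qed.

Hypotheses (i01 : i0 != i1) (j01 : j0 != j1).

Lemma cycle_mxE i j : D i j =
  if i == i0 then (if j == j0 then 1 else if j == j1 then -1 else 0)
  else if i == i1 then (if j == j0 then -1 else if j == j1 then 1 else 0)
  else 0.
Proof.
rewrite !mxE; have [-> | _] := eqVneq i i0; rewrite ?(negbTE i01) /=.
  have [-> | _] := eqVneq j j0; rewrite ?(negbTE j01) /=; first by ring.
  by case: (j == j1); rewrite /=; ring.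
have [_ | _] := eqVneq i i1; rewrite /=; last by ring.
have [-> | _] := eqVneq j j0; rewrite ?(negbTE j01) /=; first by ring.
by case: (j == j1); rewrite /=; ring.
Qed.

Lemma cycle_perturb_cases (P : 'M[R]_(m, n)) t :
  (forall i j, 0 <= P i j) -> 0 < t -> t < P i0 j1 -> t < P i1 j0 ->
  forall i j, (P + t *: D) i j = P i j \/ 0 < (P + t *: D) i j.
Proof.
move=> P0 t0 t01 t10 i j; rewrite mxE [X in _ + X]mxE cycle_mxE.
have := P0 i j.
have [-> | _] := eqVneq i i0; [|have [-> | _] := eqVneq i i1];
  (have [-> | _] := eqVneq j j0; [|have [-> | _] := eqVneq j j1]) => /= Pij;
  first [by left; ring | by right; lra].
Qed.

End Cycle.

Lemma exists_small_ln_lt (lam s B : R) : 0 < lam -> 0 < s ->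
  exists2 t, 0 < t <= s & lam * ln t < B.
Proof.
move=> lam0 s0; pose t := Num.min s (expR (B / lam - 1)).
have t0 : 0 < t by rewrite lt_min s0 expR_gt0.
exists t; first by rewrite t0 ge_min lexx.
have : ln t <= B / lam - 1.
  by rewrite -[X in _ <= X]expRK ler_ln ?posrE ?expR_gt0 // ge_min lexx orbT.
move/(ler_wpM2l (ltW lam0))/le_lt_trans; apply.
by rewrite mulrBr mulrCA divff ?gt_eqF // !mulr1 ltrBlDr ltrDl.
Qed.

Lemma entropic_cycle_gain (lam c p11 p01 p10 : R) :
  0 < lam -> 0 <= p11 -> 0 < p01 -> 0 < p10 ->
  exists t, [/\ 0 < t, t < p01, t < p10 &
    c + lam * ln t + lam * ln (p11 + t) - lam * ln (p01 - t)
      - lam * ln (p10 - t) < 0].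
Proof.
move=> lam0 p11_ge0 p01_gt0 p10_gt0.
pose s := Num.min 1 (Num.min p01 p10 / 2).
have s0 : 0 < s by rewrite lt_min ltr01 divr_gt0 // lt_min p01_gt0.
have [s1 s01 s10] : [/\ s <= 1, 2 * s <= p01 & 2 * s <= p10].
  have : s <= Num.min p01 p10 / 2 by rewrite ge_min lexx orbT.
  rewrite ler_pdivlMr // mulrC => s_le; split; first by rewrite ge_min lexx.
    by apply: le_trans s_le _; rewrite ge_min lexx.
  by apply: le_trans s_le _; rewrite ge_min lexx orbT.
have [t /andP [t0 ts] ln_t] :=
  exists_small_ln_lt (- (c + lam * ln (p11 + 1) - 2 * (lam * ln s))) lam0 s0.
exists t; split; try lra.
have ln_11 : lam * ln (p11 + t) <= lam * ln (p11 + 1).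
  by rewrite ler_pM2l // ler_ln ?posrE; lra.
have ln_01 : lam * ln s <= lam * ln (p01 - t).
  by rewrite ler_pM2l // ler_ln ?posrE; lra.
have ln_10 : lam * ln s <= lam * ln (p10 - t).
  by rewrite ler_pM2l // ler_ln ?posrE; lra.
lra.
Qed.

Lemma sinkhorn_pos m n lam C (a : 'cV[R]_m) (b : 'cV[R]_n) P :
  0 < lam -> (forall i, 0 < a i 0) -> (forall j, 0 < b j 0) ->
  is_sinkhorn lam C a b P -> forall i j, 0 < P i j.
Proof.
move=> lam0 a_pos b_pos P_opt i0 j0.
have [[P0 [P_rows P_cols]] _] := P_opt.
rewrite lt_def P0 andbT; apply/negP => /eqP P00.
have [j1 P01] := row_mass_pos P_rows (a_pos i0).
have [i1] := row_mass_pos P_cols (b_pos j0); rewrite mxE => P10.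
have i01 : i0 != i1 by apply: contraTneq P10 => <-; rewrite P00 ltxx.
have j01 : j0 != j1 by apply: contraTneq P01 => <-; rewrite P00 ltxx.
have [i10 j10] : i1 != i0 /\ j1 != j0 by rewrite eq_sym i01 eq_sym j01.
have [t [t0 t01 t10 gain]] :=
  entropic_cycle_gain (C i0 j0 + C i1 j1 - C i0 j1 - C i1 j0)
    lam0 (P0 i1 j1) P01 P10.
pose Q := P + t *: cycle_mx i0 i1 j0 j1.
have Q_cases : forall i j, Q i j = P i j \/ 0 < Q i j.
  exact: cycle_perturb_cases.
have Q0 : forall i j, 0 <= Q i j by move=> i j; case: (Q_cases i j) => [->|/ltW].
have Q_feas : in_transport a b Q :=
  in_transport_cycle (conj P0 (conj P_rows P_cols)) Q0.
have QP : Q - P = t *: cycle_mx i0 i1 j0 j1 by rewrite /Q addrAC subrr add0r.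
have Q_corner i j : Q i j = P i j + t * cycle_mx i0 i1 j0 j1 i j.
  by rewrite /Q !mxE.
clearbody Q; have := sinkhorn_first_order (ltW lam0) P_opt Q_feas Q_cases.
rewrite QP frobZl frob_cycle_mx !mxE !Q_corner !cycle_mxE //.
rewrite !eqxx /= !(negbTE i01, negbTE j01, negbTE i10, negbTE j10) /=.
rewrite P00 add0r !mulr1 !mulrN1 pmulr_rge0 //; lra.
Qed.

End SinkhornPositive.

Section Vectorization.
Variable R : realType.
Variables m n : nat.

Lemma vecE (X : 'M[R]_(m, n)) i j : vec X (mxvec_index j i) 0 = X i j.
Proof. by rewrite /vec mxE mxvecE mxE. Qed.

Lemma vecB (X Y : 'M[R]_(m, n)) : vec (X - Y) = vec X - vec Y.
Proof. by rewrite /vec !linearB. Qed.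

Lemma vecZ (c : R) (X : 'M[R]_(m, n)) : vec (c *: X) = c *: vec X.
Proof. by rewrite /vec !linearZ. Qed.

Lemma vecP (x y : 'cV[R]_(n * m)) :
  (forall i j, x (mxvec_index j i) 0 = y (mxvec_index j i) 0) -> x = y.
Proof.
by move=> xy; apply/matrixP => k c; rewrite (ord1 c); case/mxvec_indexP: k.
Qed.

Lemma sum_vec_index (F : 'I_(n * m) -> R) :
  \sum_k F k = \sum_(i < m) \sum_(j < n) F (mxvec_index j i).
Proof.
rewrite (reindex _ (curry_mxvec_bij _ _)) /= exchange_big pair_big /=.
by apply: eq_bigr => -[j i].
Qed.

Lemma scaled_diag_inv_vec_mulE (lam : R) (P : 'M[R]_(m, n))
    (x : 'cV[R]_(n * m)) i j :
  (lam *: diag_mx (map_mx (fun x => x^-1) (vec P))^T *m x) (mxvec_index j i) 0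
    = lam / P i j * x (mxvec_index j i) 0.
Proof. by rewrite -scalemxAl mxE mul_diag_mx mxE [_^T _ _]mxE mxE vecE mulrA. Qed.

Lemma vec_dot_hadamard_eq0 (P U : 'M[R]_(m, n)) :
  (forall i j, 0 < P i j) -> (vec U)^T *m vec (hadamard P U) = 0 -> U = 0.
Proof.
move=> P_pos /(congr1 (fun M : 'M[R]_1 => M 0 0)).
rewrite mxE sum_vec_index [RHS]mxE.
under eq_bigr do under eq_bigr do rewrite mxE !vecE mxE mulrCA -expr2.
have term_ge0 i j : 0 <= P i j * U i j ^+ 2 by rewrite mulr_ge0 ?sqr_ge0 ?ltW.
move=> sum0; apply/matrixP => i j; rewrite [RHS]mxE.
have row0 := psumr_eq0P (fun i _ => sumr_ge0 _ (fun j _ => term_ge0 i j)) sum0.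
have /eqP := psumr_eq0P (fun j _ => term_ge0 i j) (row0 i isT) (i := j) isT.
by rewrite mulf_eq0 (gt_eqF (P_pos i j)) sqrf_eq0 => /eqP.
Qed.

End Vectorization.

Section IncidenceMatrix.
Variable R : realType.
Variables m n : nat.
Local Notation Et := (Etilde R m n.+1).

Definition zero_ext (w : 'cV[R]_n) : 'cV[R]_n.+1 :=
  \col_j (match insub (val j) with Some j' => w j' 0 | None => 0 end).

Lemma zero_ext_widen (w : 'cV[R]_n) (j : 'I_n) (n_le : (n <= n.+1)%N) :
  zero_ext w (widen_ord n_le j) 0 = w j 0.
Proof.
rewrite mxE; case: insubP => [j' _ j'E|]; last by rewrite /= ltn_ord.
by congr (w _ 0); apply: val_inj.
Qed.

Lemma zero_ext_max (w : 'cV[R]_n) : zero_ext w ord_max 0 = 0.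
Proof. by rewrite mxE; case: insubP => [j|//]; rewrite /= ltnn. Qed.

Definition potential_mx (y : 'cV[R]_(m + n)) : 'M[R]_(m, n.+1) :=
  \matrix_(i, j) (usubmx y i 0 + zero_ext (dsubmx y) j 0).

Lemma Etilde_lshift (i0 : 'I_m) i j :
  Et (mxvec_index j i) (lshift n i0) = (i == i0)%:R.
Proof.
rewrite /Etilde /Emx mxE mxE vecE /Ecol.
rewrite (_ : widen_ord _ _ = lshift n.+1 i0); last exact: val_inj.
by rewrite (unsplitK (inl _ i0)) mxE.
Qed.

Lemma Etilde_rshift (j0 : 'I_n) i j :
  Et (mxvec_index j i) (rshift m j0) = (j == widen_ord (leq_pred n.+1) j0)%:R.
Proof.
rewrite /Etilde /Emx mxE mxE vecE /Ecol.
rewrite (_ : widen_ord _ _ = rshift m (widen_ord (leq_pred n.+1) j0)); last first.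
  exact: val_inj.
by rewrite (unsplitK (inr _ _)) mxE.
Qed.

Lemma sum_eq_delta k (i0 : 'I_k) (f : 'I_k -> R) :
  \sum_i (i == i0)%:R * f i = f i0.
Proof.
rewrite (bigD1 i0) //= eqxx mul1r big1 ?addr0 // => i /negbTE ->.
by rewrite mul0r.
Qed.

Lemma sum_eq_widen (j : 'I_n.+1) (w : 'cV[R]_n) :
  \sum_(j0 < n) (j == widen_ord (leq_pred n.+1) j0)%:R * w j0 0 = zero_ext w j 0.
Proof.
rewrite mxE; case: insubP => [j' _ j'E|j_max].
  rewrite -(sum_eq_delta j' (fun j0 => w j0 0)); apply: eq_bigr => j0 _.
  congr (_%:R * _).
  by rewrite -!val_eqE /= j'E eq_sym.
rewrite big1 // => j0 _; rewrite (_ : (_ == _) = false) ?mul0r //.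
by apply: contraNF j_max => /eqP -> /=.
Qed.

Lemma Etilde_mul (y : 'cV[R]_(m + n)) : Et *m y = vec (potential_mx y).
Proof.
apply: vecP => i j; rewrite vecE mxE [RHS]mxE big_split_ord /=; congr (_ + _).
  rewrite mxE -(sum_eq_delta i (fun i0 => y (lshift n i0) 0)).
  by apply: eq_bigr => i0 _; rewrite Etilde_lshift eq_sym.
rewrite -sum_eq_widen; apply: eq_bigr => j0 _.
by rewrite Etilde_rshift mxE.
Qed.

Lemma trEtilde_mul (X : 'M[R]_(m, n.+1)) :
  Et^T *m vec X = col_mx (X *m const_mx 1) ((tcols X)^T *m const_mx 1).
Proof.
apply/matrixP => l c; rewrite (ord1 c) mxE sum_vec_index.
rewrite -[l]splitK; case: (split l) => [i0|j0] /=.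
- rewrite col_mxEu mxE.
  under eq_bigr do under eq_bigr do rewrite mxE Etilde_lshift vecE.
  rewrite (bigD1 i0) //= [X in _ + X]big1 ?addr0 => [|i /negbTE -> ].
    by apply: eq_bigr => j _; rewrite eqxx mul1r mxE mulr1.
  by apply: big1 => j _; rewrite mul0r.
- rewrite col_mxEd mxE.
  under eq_bigr do under eq_bigr do rewrite mxE Etilde_rshift vecE.
  rewrite exchange_big /= (bigD1 (widen_ord (leq_pred n.+1) j0)) //=.
  rewrite [X in _ + X]big1 ?addr0 => [|j /negbTE ->].
    by apply: eq_bigr => i _; rewrite eqxx mul1r !mxE mulr1.
  by apply: big1 => i _; rewrite mul0r.
Qed.

Lemma potential_mx_eq0 (i0 : 'I_m) (y : 'cV[R]_(m + n)) :
  potential_mx y = 0 -> y = 0.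
Proof.
move=> U0; have y_up : usubmx y = 0.
  apply/matrixP => i c; rewrite (ord1 c) [RHS]mxE.
  have := congr1 (fun U : 'M[R]_(m, n.+1) => U i ord_max) U0.
  by rewrite /= mxE [RHS]mxE zero_ext_max addr0.
have y_down : dsubmx y = 0.
  apply/matrixP => j c; rewrite (ord1 c) [RHS]mxE.
  have := congr1 (fun U : 'M[R]_(m, n.+1) => U i0 (widen_ord (leq_pred n.+1) j))
    U0.
  by rewrite /= mxE [RHS]mxE zero_ext_widen y_up mxE add0r.
by rewrite -[y]vsubmxK y_up y_down col_mx0.
Qed.

Lemma kkt_mul lam (P : 'M[R]_(m, n.+1)) x (y : 'cV[R]_(m + n)) :
  kkt lam P *m col_mx x (- y) =
  col_mx (lam *: diag_mx (map_mx (fun x => x^-1) (vec P))^T *m x - Et *m y)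
         (Et^T *m x).
Proof. by rewrite /kkt mul_block_col mul0mx addr0 mulmxN. Qed.

End IncidenceMatrix.

Section Algorithm.
Variable R : realType.
Variables (m n : nat) (a : 'cV[R]_m) (b : 'cV[R]_n.+1) (P : 'M[R]_(m, n.+1)).
Local Notation Et := (Etilde R m n.+1).
Hypotheses (P_rows : P *m const_mx 1 = a) (P_cols : P^T *m const_mx 1 = b).

(* With [Etilde_mul] this says [K = E~^T diag(p) E~]. *)
Lemma alg_K_mul (y : 'cV[R]_(m + n)) :
  alg_K a b P *m y = Et^T *m vec (hadamard P (potential_mx y)).
Proof.
rewrite trEtilde_mul -{1}[y]vsubmxK /alg_K mul_block_col.
congr col_mx; apply/matrixP => i c; rewrite (ord1 c) {c}.
- rewrite mxE mul_diag_mx mxE [a^T _ _]mxE -P_rows mxE [(tcols P *m _) _ _]mxE.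
  rewrite [RHS]mxE.
  under eq_bigr do rewrite [const_mx _ _ _]mxE mulr1.
  under [RHS]eq_bigr do rewrite [hadamard _ _ _ _]mxE [potential_mx _ _ _]mxE
    [const_mx _ _ _]mxE mulr1 mulrDr.
  rewrite big_split /= -mulr_suml [X in _ = _ + X]big_ord_recr /=.
  rewrite zero_ext_max mulr0 addr0.
  under [X in _ = _ + X]eq_bigr do rewrite zero_ext_widen.
  congr (_ + _); apply: eq_bigr => j _; rewrite mxE; congr (P i _ * _).
  exact: val_inj.
- rewrite mxE mul_diag_mx [RHS]mxE.
  under [RHS]eq_bigr do rewrite [(tcols _)^T _ _]mxE [tcols _ _ _]mxE
    [hadamard _ _ _ _]mxE [potential_mx _ _ _]mxE [const_mx _ _ _]mxE mulr1
    mulrDr zero_ext_widen.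
  rewrite big_split /= -mulr_suml; congr (_ + _).
    by rewrite mxE; apply: eq_bigr => j _; rewrite !mxE.
  rewrite mxE [(tvec b)^T _ _]mxE mxE -P_cols mxE; congr (_ * _).
  by apply: eq_bigr => j _; rewrite !mxE mulr1.
Qed.

Lemma alg_K_unit (i0 : 'I_m) :
  (forall i j, 0 < P i j) -> alg_K a b P \in unitmx.
Proof.
move=> P_pos; rewrite unitmxE unitfE -det_tr.
apply/negP => /det0P [v v_neq0 vK].
have Kv0 : alg_K a b P *m v^T = 0.
  by rewrite -[alg_K a b P]trmxK -trmx_mul vK trmx0.
suff /(potential_mx_eq0 i0)/(congr1 trmx) : potential_mx v^T = 0.
  by rewrite trmxK trmx0 => v0; rewrite v0 eqxx in v_neq0.
apply: (vec_dot_hadamard_eq0 P_pos).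
by rewrite -Etilde_mul trmx_mul -mulmxA -alg_K_mul Kv0 mulmx0.
Qed.

Variables (lam : R) (G : 'M[R]_(m, n.+1)).

(* The [x] determined by [y] through the first block row of the KKT system;
   [alg_GC] is its value at [y = alg_g]. *)
Definition primal_of_dual (y : 'cV[R]_(m + n)) : 'M[R]_(m, n.+1) :=
  - lam^-1 *: (alg_T P G - hadamard P (potential_mx y)).

Lemma primal_of_dualE y i j :
  primal_of_dual y i j = - lam^-1 * (P i j * G i j - P i j * potential_mx y i j).
Proof. by rewrite !mxE. Qed.

Lemma trEtilde_primal y :
  Et^T *m vec (primal_of_dual y) =
  - lam^-1 *: (col_mx (alg_ta P G) (alg_tb P G) - alg_K a b P *m y).
Proof.
by rewrite /primal_of_dual vecZ vecB -scalemxAr mulmxBr alg_K_mul !trEtilde_mul.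
Qed.

Lemma kkt_top_iff x y : lam != 0 -> (forall i j, P i j != 0) ->
  lam *: diag_mx (map_mx (fun x => x^-1) (vec P))^T *m x - Et *m y = - vec G
  <-> x = vec (primal_of_dual y).
Proof.
move=> lam_neq0 P_neq0; rewrite Etilde_mul.
have top_entry (z : 'cV[R]_(n.+1 * m)) i j :
    (lam *: diag_mx (map_mx (fun x => x^-1) (vec P))^T *m z
       - vec (potential_mx y)) (mxvec_index j i) 0
    = lam / P i j * z (mxvec_index j i) 0 - potential_mx y i j.
  by rewrite mxE scaled_diag_inv_vec_mulE [X in _ + X]mxE vecE.
split => [top | ->]; apply: vecP => i j.
  have := congr1 (fun z : 'cV[R]_(n.+1 * m) => z (mxvec_index j i) 0) top.
  rewrite /= top_entry [RHS]mxE !vecE => top_ij.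
  rewrite primal_of_dualE; set u := potential_mx y i j in top_ij *.
  have -> : x (mxvec_index j i) 0 =
      P i j / lam * (lam / P i j * x (mxvec_index j i) 0 - u) + P i j / lam * u.
    by field; rewrite lam_neq0 P_neq0.
  by rewrite top_ij; field.
rewrite top_entry [RHS]mxE !vecE primal_of_dualE.
by field; rewrite lam_neq0 P_neq0.
Qed.

End Algorithm.

Theorem theorem2 (R : realType) (m n : nat) (lam : R)
  (C : 'M[R]_(m, n)) (a : 'cV[R]_m) (b : 'cV[R]_n) (P G : 'M[R]_(m, n)) :
  (2 <= m)%N -> (2 <= n)%N -> 0 < lam ->
  in_simplex a -> in_simplex b ->
  (forall i, 0 < a i 0) -> (forall j, 0 < b j 0) ->
  is_sinkhorn lam C a b P ->
  alg_K a b P \in unitmx /\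
  kkt lam P *m col_mx (vec (alg_GC lam a b P G)) (- alg_g a b P G)
    = col_mx (- vec G) 0 /\
  (forall (x : 'cV[R]_(n * m)) (y : 'cV[R]_(m + n.-1)),
     kkt lam P *m col_mx x (- y) = col_mx (- vec G) 0 ->
     x = vec (alg_GC lam a b P G) /\ y = alg_g a b P G).
Proof.
move=> m2 n2 lam_gt0 _ _ a_pos b_pos P_opt.
have P_pos := sinkhorn_pos lam_gt0 a_pos b_pos P_opt.
have [[_ [P_rows P_cols]] _] := P_opt.
have i0 : 'I_m := Ordinal (leq_trans (isT : (0 < 2)%N) m2).
case: n n2 b P G P_rows P_cols P_pos {C P_opt b_pos} => [|n] // _ b P G.
move=> P_rows P_cols P_pos.
have lam_neq0 : lam != 0 by rewrite gt_eqF.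
have P_neq0 i j : P i j != 0 by rewrite gt_eqF.
have K_unit := alg_K_unit P_rows P_cols i0 P_pos.
split=> //.
split.
  rewrite kkt_mul; congr col_mx; first by apply/kkt_top_iff.
  by rewrite (trEtilde_primal P_rows P_cols) mulKVmx // subrr scaler0.
move=> x y; rewrite kkt_mul => /eq_col_mx [/kkt_top_iff -> // bottom].
suff -> : y = alg_g a b P G by [].
move/eqP: bottom; rewrite (trEtilde_primal P_rows P_cols).
rewrite scaler_eq0 oppr_eq0 invr_eq0.
by rewrite (negbTE lam_neq0) subr_eq0 => /eqP t_eq; rewrite /alg_g t_eq mulKmx.
Qed.
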